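(* Let $H$ be a topological group which is either completely metrizable or locally compact Hausdorff, let $G$ be a group with $|G|<2^{\aleph_0}$, and let $\phi:H\to G$ be a group homomorphism. Then there exists an open neighborhood $V$ of $1_H$ such that for every neighborhood $V'$ of $1_H$ with $V'\subseteq V$ we have $\phi(V')=\phi(V)$. *)

From HB Require Import structures.
From mathcomp Require Import all_boot all_order all_algebra.
From mathcomp Require Import all_classical all_reals all_analysis.
From Stdlib Require Rdefinitions.
Set Implicit Arguments. Unset Strict Implicit. Unset Printing Implicit Defensive.
Local Open Scope classical_set_scope.

Definition is_group (T : Type) (mul : T -> T -> T) (inv : T -> T) (one : T) : Prop :=
  (forall x y z, mul x (mul y z) = mul (mul x y) z) /\
  (forall x, mul one x = x) /\ (forall x, mul x one = x) /\
  (forall x, mul (inv x) x = one) /\ (forall x, mul x (inv x) = one).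

Definition is_topological_group (T : topologicalType)
  (mul : T -> T -> T) (inv : T -> T) (one : T) : Prop :=
  is_group mul inv one /\
  continuous (fun p : T * T => mul p.1 p.2) /\ continuous inv.

Definition completely_metrizable (T : topologicalType) : Prop :=
  exists d : T -> T -> Rdefinitions.R,
    (forall x y, Rdefinitions.Rle Rdefinitions.R0 (d x y)) /\
    (forall x y, d x y = Rdefinitions.R0 <-> x = y) /\
    (forall x y, d x y = d y x) /\
    (forall x y z, Rdefinitions.Rle (d x z) (Rdefinitions.Rplus (d x y) (d y z))) /\
    (forall A : set T, open A <->
       (forall x, A x -> exists eps, Rdefinitions.Rlt Rdefinitions.R0 eps /\
                   (forall y, Rdefinitions.Rlt (d x y) eps -> A y))) /\
    (forall u : nat -> T,
       (forall eps, Rdefinitions.Rlt Rdefinitions.R0 eps -> exists N, forall m n, (N <= m)%N -> (N <= n)%N ->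
          Rdefinitions.Rlt (d (u m) (u n)) eps) ->
       exists x, forall eps, Rdefinitions.Rlt Rdefinitions.R0 eps -> exists N, forall n, (N <= n)%N ->
          Rdefinitions.Rlt (d (u n) x) eps).

Definition locally_compact_hausdorff (T : topologicalType) : Prop :=
  hausdorff_space T /\ forall x : T, exists K : set T, compact K /\ nbhs x K.

(* |G| < 2^aleph_0 : there is no injection of the continuum (nat -> bool) into G. *)
Definition card_lt_continuum (G : Type) : Prop :=
  ~ exists f : (nat -> bool) -> G, injective f.

From HB Require Import structures.
From mathcomp Require Import all_boot all_order all_algebra.
From mathcomp Require Import all_classical all_reals all_analysis.
From Stdlib Require Import RIneq Rbasic_fun Rtrigo_def Lra.
Set Implicit Arguments. Unset Strict Implicit. Unset Printing Implicit Defensive.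
Local Open Scope classical_set_scope.

(* Suppose no neighbourhood of 1 has a stable image under phi.  Then every
   neighbourhood of 1 contains some g with phi(g) outside phi(W) for some
   neighbourhood W of 1; choosing E with E E^-1 inside W, the translates p E
   and p g E of such a neighbourhood have disjoint images.  So every set with
   nonempty interior splits into two such sets, and iterating the splitting
   along the binary tree, with pieces shrinking as complete metrizability or
   local compactness allows, each branch s : nat -> bool determines a point
   x_s; s |-> phi(x_s) then injects the continuum into G. *)

Section Group.
Variables (T : Type) (mul : T -> T -> T) (inv : T -> T) (one : T).
Hypothesis gT : is_group mul inv one.

Lemma grp_mulA x y z : mul x (mul y z) = mul (mul x y) z.
Proof. by case: gT. Qed.

Lemma grp_mul1g x : mul one x = x.
Proof. by case: gT => _ []. Qed.

Lemma grp_mulg1 x : mul x one = x.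
Proof. by case: gT => _ [_ []]. Qed.

Lemma grp_mulVg x : mul (inv x) x = one.
Proof. by case: gT => _ [_ [_ []]]. Qed.

Lemma grp_mulgV x : mul x (inv x) = one.
Proof. by case: gT => _ [_ [_ []]]. Qed.

Lemma grp_mulKg x y : mul (inv x) (mul x y) = y.
Proof. by rewrite grp_mulA grp_mulVg grp_mul1g. Qed.

Lemma grp_mulKVg x y : mul x (mul (inv x) y) = y.
Proof. by rewrite grp_mulA grp_mulgV grp_mul1g. Qed.

Lemma grp_mulgI x : injective (mul x).
Proof. by move=> y z /(congr1 (mul (inv x))); rewrite !grp_mulKg. Qed.

Lemma grp_invgK x : inv (inv x) = x.
Proof. by apply: (@grp_mulgI (inv x)); rewrite grp_mulgV grp_mulVg. Qed.

Lemma grp_invMg x y : inv (mul x y) = mul (inv y) (inv x).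
Proof.
by apply: (@grp_mulgI (mul x y)); rewrite grp_mulgV -grp_mulA grp_mulKVg grp_mulgV.
Qed.

End Group.
Arguments grp_mulgI [T mul inv one] gT x [x1 x2].

Lemma grp_morph1 (H G : Type) (mulH : H -> H -> H) (invH : H -> H) (oneH : H)
    (mulG : G -> G -> G) (invG : G -> G) (oneG : G) (phi : H -> G) :
  is_group mulH invH oneH -> is_group mulG invG oneG ->
  {morph phi : x y / mulH x y >-> mulG x y} -> phi oneH = oneG.
Proof.
move=> gH gG phiM; apply: (grp_mulgI gG (phi oneH)).
by rewrite -phiM (grp_mul1g gH) (grp_mulg1 gG).
Qed.

Section TopologicalGroup.
Variables (H : topologicalType) (mul : H -> H -> H) (inv : H -> H) (one : H).
Hypothesis tgH : is_topological_group mul inv one.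
Let gH : is_group mul inv one := proj1 tgH.

Lemma nbhs_mul x y N : nbhs (mul x y) N ->
  exists P Q, [/\ nbhs x P, nbhs y Q & forall a b, P a -> Q b -> N (mul a b)].
Proof.
case: tgH => _ [mul_cont _] /(mul_cont (x, y))[[P Q] /= [xP yQ] PQN].
by exists P, Q; split => // a b Pa Qb; exact: (PQN (a, b)).
Qed.

Lemma nbhs_inv x N : nbhs (inv x) N -> nbhs x (inv @^-1` N).
Proof. by case: tgH => _ [_ inv_cont]; exact: inv_cont. Qed.

Lemma nbhs_mulg a y N : nbhs (mul a y) N -> nbhs y (mul a @^-1` N).
Proof.
move=> /nbhs_mul[P [Q [aP yQ PQN]]].
by apply: filterS yQ => z; exact: PQN (nbhs_singleton aP).
Qed.

Lemma nbhs1_div W : nbhs one W ->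
  exists2 E, nbhs one E & forall a b, E a -> E b -> W (mul a (inv b)).
Proof.
rewrite -{1}(grp_mulgV gH one) => /nbhs_mul[P [Q [P1 Q1 PQW]]].
exists (P `&` inv @^-1` Q); first by apply: filterI => //; exact: nbhs_inv.
by move=> a b [Pa _] [_ Qb]; exact: PQW.
Qed.

Lemma topological_group_regular : regular_space H.
Proof.
move=> y N yN.
have /nbhs1_div[E E1 EN] : nbhs one (mul y @^-1` N).
  by apply: nbhs_mulg; rewrite (grp_mulg1 gH).
exists (mul (inv y) @^-1` E); first by apply: nbhs_mulg; rewrite (grp_mulVg gH).
move=> z /(_ (mul (inv z) @^-1` E)) [|w [/= Ew Ez]].
  by apply: nbhs_mulg; rewrite (grp_mulVg gH).
have := EN _ _ Ew Ez; rewrite /= (grp_invMg gH) (grp_invgK gH) -(grp_mulA gH).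
by rewrite !(grp_mulKVg gH).
Qed.

End TopologicalGroup.

Section UnstableImage.
Variables (H : topologicalType) (mulH : H -> H -> H) (invH : H -> H) (oneH : H).
Hypothesis tgH : is_topological_group mulH invH oneH.
Variables (G : Type) (mulG : G -> G -> G) (invG : G -> G) (oneG : G).
Hypothesis gG : is_group mulG invG oneG.
Variable phi : H -> G.
Hypothesis phiM : {morph phi : x y / mulH x y >-> mulG x y}.
Hypothesis unstable : ~ exists V : set H, open V /\ V oneH /\
  forall V', nbhs oneH V' -> V' `<=` V -> phi @` V' = phi @` V.
Let gH : is_group mulH invH oneH := proj1 tgH.

Lemma unstable_nbhs1 V : nbhs oneH V ->
  exists2 g, nbhs g V & exists2 W, nbhs oneH W & forall w, W w -> phi w <> phi g.
Proof.
move=> V1; apply: contrapT => no_g; apply: unstable.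
exists V°; split; first exact: open_interior.
split; first exact: nbhs_singleton (nbhs_interior V1).
move=> V' V'1 V'V; apply/seteqP; split; first exact: image_subset.
move=> _ [g Vg <-]; apply: contrapT => notin; apply: no_g.
by exists g => //; exists V' => // w V'w phiwg; apply: notin; exists w.
Qed.

Lemma unstable_split C : interior C !=set0 -> exists C0 C1 : set H,
  [/\ interior C0 !=set0, interior C1 !=set0, C0 `<=` C, C1 `<=` C &
      forall a b, C0 a -> C1 b -> phi a <> phi b].
Proof.
move=> [p pC].
have /unstable_nbhs1[g gC [W W1 Wg]] : nbhs oneH (mulH p @^-1` C).
  by apply: (nbhs_mulg tgH); rewrite (grp_mulg1 gH).
have [E E1 EW] := nbhs1_div tgH W1.
exists (C `&` mulH (invH p) @^-1` E), (C `&` mulH (invH (mulH p g)) @^-1` E).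
split; [| |exact: subIsetl..|].
- exists p; apply: filterI => //; apply: (nbhs_mulg tgH); by rewrite (grp_mulVg gH).
- exists (mulH p g); apply: filterI; last by apply: (nbhs_mulg tgH); rewrite (grp_mulVg gH).
  have : nbhs (mulH (invH p) (mulH p g)) (mulH p @^-1` C) by rewrite (grp_mulKg gH).
  by move=> /(nbhs_mulg tgH); apply: filterS => z /=; rewrite (grp_mulKVg gH).
(* With e1 := p^-1 a and e2 := (p g)^-1 b, phi a = phi b means
   phi e1 = phi g * phi e2, i.e. phi (e1 e2^-1) = phi g. *)
move=> a b [_ Ea] [_ Eb] eab; apply: (Wg _ (EW _ _ Ea Eb)); rewrite phiM.
have /(grp_mulgI gG) -> : mulG (phi p) (phi (mulH (invH p) a)) =
    mulG (phi p) (mulG (phi g) (phi (mulH (invH (mulH p g)) b))).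
  by rewrite -!phiM (grp_mulKVg gH) (grp_mulA gH) (grp_mulKVg gH).
by rewrite -(grp_mulA gG) -phiM (grp_mulgV gH) (grp_morph1 gH gG phiM) (grp_mulg1 gG).
Qed.

End UnstableImage.

Lemma nested_sets_le (T : Type) (A : nat -> set T) :
  (forall n, A n.+1 `<=` A n) -> {homo A : m n / (m <= n)%N >-> n `<=` m}.
Proof.
move=> decr; apply: homo_leq => [X|Y X Z YX ZY|//]; first exact: subset_refl.
exact: subset_trans ZY YX.
Qed.

(* [small n] stands for "of diameter < 1/(n+1)" in a complete metric space and
   for "contained in a compact set" in a locally compact one. *)
Definition nested_complete (T : topologicalType) : Prop :=
  exists small : nat -> set T -> Prop,
    (forall n (x : T) N, nbhs x N -> exists2 A, nbhs x A & A `<=` N /\ small n A) /\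
    (forall A : nat -> set T, (forall n, A n.+1 `<=` A n) -> (forall n, A n !=set0) ->
       (forall n, small n (A n)) -> exists x, forall n, closure (A n) x).

Section CantorScheme.
Variables (T : topologicalType) (G : Type) (f : T -> G).
Variable small : nat -> set T -> Prop.
Hypothesis small_nbhs :
  forall n (x : T) N, nbhs x N -> exists2 A, nbhs x A & A `<=` N /\ small n A.
Hypothesis small_nested : forall A : nat -> set T,
  (forall n, A n.+1 `<=` A n) -> (forall n, A n !=set0) ->
  (forall n, small n (A n)) -> exists x, forall n, closure (A n) x.

Definition separating_split (n : nat) (C : set T) (S : bool -> set T) : Prop :=
  (forall b, [/\ interior (S b) !=set0, closure (S b) `<=` C & small n (S b)]) /\
  forall a b, S false a -> S true b -> f a <> f b.

Section Cells.
Variable split : nat -> set T -> bool -> set T.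
Hypothesis splitP : forall n C, interior C !=set0 -> separating_split n C (split n C).
Hypothesis T0 : [set: T] !=set0.

Fixpoint cell (s : nat -> bool) (n : nat) : set T :=
  if n is m.+1 then split m (cell s m) (s m) else setT.

Lemma cell_interior s n : interior (cell s n) !=set0.
Proof.
elim: n => [|n IH] /=; first by case: T0 => x _; exists x; exact: filterT.
by have [/(_ (s n))[]] := splitP n IH.
Qed.

Lemma cell_closure s n : closure (cell s n.+1) `<=` cell s n.
Proof. by have [/(_ (s n))[]] := splitP n (cell_interior s n). Qed.

Lemma cell_eq s t n : (forall m, (m < n)%N -> s m = t m) -> cell s n = cell t n.
Proof. by elim: n => [//|n IH] st /=; rewrite IH ?st // => m /leqW; exact: st. Qed.

Lemma cell_point s : exists x, forall n, cell s n x.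
Proof.
have decr n : cell s n.+2 `<=` cell s n.+1.
  by move=> x /subset_closure /cell_closure.
have ne n : cell s n.+1 !=set0.
  by have [x /nbhs_singleton] := cell_interior s n.+1; exists x.
have sm n : small n (cell s n.+1).
  by have [/(_ (s n))[]] := splitP n (cell_interior s n).
have [x clx] := small_nested (A := fun n => cell s n.+1) decr ne sm.
by exists x => n; exact: cell_closure (clx n).
Qed.

Lemma cells_injection : exists g : (nat -> bool) -> G, injective g.
Proof.
have [x xP] := choice cell_point.
exists (f \o x) => s t /= fst; apply/funext => n; elim/ltn_ind: n => n IH.
have := xP s n.+1; have := xP t n.+1; rewrite /= -(cell_eq IH).
have [_ sep] := splitP n (cell_interior s n).
case: (s n); case: (t n) => // xt xs; exfalso.
- exact: sep _ _ xt xs (esym fst).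
- exact: sep _ _ xs xt fst.
Qed.

End Cells.

Hypothesis regT : regular_space T.

Lemma small_closed_nbhs n (x : T) N : nbhs x N ->
  exists2 A, nbhs x A & closure A `<=` N /\ small n A.
Proof.
move=> /regT[B xB clBN]; have [A xA [AB smallA]] := small_nbhs n xB.
by exists A => //; split => //; apply: subset_trans clBN; exact: closureS.
Qed.

Lemma separating_split_injection : [set: T] !=set0 ->
  (forall C, interior C !=set0 -> exists C0 C1 : set T,
     [/\ interior C0 !=set0, interior C1 !=set0, C0 `<=` C, C1 `<=` C &
         forall a b, C0 a -> C1 b -> f a <> f b]) ->
  exists g : (nat -> bool) -> G, injective g.
Proof.
move=> T0 splitC.
have shrink n C : exists S, interior C !=set0 -> separating_split n C S.
  have [/splitC[C0 [C1 [[p0 C0p] [p1 C1p] C0C C1C sep]]]|] :=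
    pselect (interior C !=set0); last by exists (fun=> set0).
  have [A0 A0p [clA0 smallA0]] := small_closed_nbhs n C0p.
  have [A1 A1p [clA1 smallA1]] := small_closed_nbhs n C1p.
  exists (fun b => if b then A1 else A0) => _; split => [[]|a b A0a A1b].
  - by split; [exists p1 | exact: subset_trans clA1 C1C |].
  - by split; [exists p0 | exact: subset_trans clA0 C0C |].
  - exact: sep (clA0 _ (subset_closure A0a)) (clA1 _ (subset_closure A1b)).
have [S SP] := choice (fun nC : nat * set T => shrink nC.1 nC.2).
exact: (@cells_injection (fun n C => S (n, C)) (fun n C => SP (n, C)) T0).
Qed.

End CantorScheme.

Section CompleteMetric.
Local Open Scope R_scope.
Variables (T : topologicalType) (d : T -> T -> R).
Hypothesis d_xx : forall x, d x x = 0.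
Hypothesis d_sym : forall x y, d x y = d y x.
Hypothesis d_triangle : forall x y z, d x z <= d x y + d y z.
Hypothesis d_open : forall A : set T, open A <->
  (forall x, A x -> exists eps, 0 < eps /\ (forall y, d x y < eps -> A y)).
Hypothesis d_complete : forall u : nat -> T,
  (forall eps, 0 < eps -> exists N, forall m n, leq N m -> leq N n ->
     d (u m) (u n) < eps) ->
  exists x, forall eps, 0 < eps -> exists N, forall n, leq N n -> d (u n) x < eps.

Lemma open_dball x r : open [set y | d x y < r].
Proof.
apply/d_open => y /= xy; exists (r - d x y); split=> [|z yz /=]; first lra.
by have := d_triangle x y z; lra.
Qed.

Lemma nbhs_dball x r : 0 < r -> nbhs x [set y | d x y < r].
Proof.
by move=> r0; apply: open_nbhs_nbhs; split; [exact: open_dball | rewrite /= d_xx].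
Qed.

Lemma nbhs_dball_subset x N : nbhs x N ->
  exists2 eps, 0 < eps & [set y | d x y < eps] `<=` N.
Proof.
rewrite nbhsE; case=> O [oO Ox] ON.
have [eps [eps0 epsO]] := proj1 (d_open O) oO x Ox.
by exists eps => // y /epsO /ON.
Qed.

Definition diam_lt_inv (n : nat) (A : set T) : Prop :=
  forall y z, A y -> A z -> d y z < / INR n.+1.

Lemma nbhs_diam_lt_inv n (x : T) N : nbhs x N ->
  exists2 A, nbhs x A & A `<=` N /\ diam_lt_inv n A.
Proof.
move=> /nbhs_dball_subset[eps eps0 epsN].
have inv0 : 0 < / INR n.+1 by apply/Rinv_0_lt_compat/lt_0_INR/ltP.
have [r [r0 [reps rn]]] : exists r, 0 < r /\ r <= eps /\ r <= / INR n.+1 / 2.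
  exists (Rmin eps (/ INR n.+1 / 2)); split; first by apply: Rmin_glb_lt; lra.
  by split; [exact: Rmin_l | exact: Rmin_r].
exists [set y | d x y < r]; first exact: nbhs_dball.
split=> [y xy | y z xy xz]; first by apply: epsN; rewrite /= in xy *; lra.
rewrite /= in xy xz; have := d_triangle y x z; rewrite (d_sym y x); lra.
Qed.

Lemma diam_lt_inv_nested (A : nat -> set T) : (forall n, A n.+1 `<=` A n) ->
  (forall n, A n !=set0) -> (forall n, diam_lt_inv n (A n)) ->
  exists x, forall n, closure (A n) x.
Proof.
move=> decr /choice[a aA] smallA.
have aAN N n : leq N n -> A N (a n) by move=> Nn; exact: nested_sets_le decr _ _ Nn _ (aA n).
have [x ax] : exists x, forall eps, 0 < eps ->
    exists N, forall n, leq N n -> d (a n) x < eps.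
  apply: d_complete => eps eps0; have [N [Neps N0]] := archimed_cor1 eps eps0.
  exists N => m k Nm Nk; apply: Rlt_trans (smallA N _ _ (aAN _ _ Nm) (aAN _ _ Nk)) _.
  apply: Rle_lt_trans Neps; apply: Rinv_le_contravar; first exact: lt_0_INR.
  by apply: le_INR; apply/leP.
exists x => n B /nbhs_dball_subset[eps eps0 epsB]; have [N aNx] := ax eps eps0.
exists (a (maxn N n)); split; first exact/aAN/leq_maxr.
by apply: epsB; rewrite /= d_sym; exact/aNx/leq_maxl.
Qed.

End CompleteMetric.

Lemma completely_metrizable_nested_complete (T : topologicalType) :
  completely_metrizable T -> nested_complete T.
Proof.
move=> [d [_ [d_eq0 [d_sym [d_triangle [d_open d_complete]]]]]].
have d_xx x : d x x = 0%R by exact/d_eq0.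
exists (diam_lt_inv d); split.
- exact: nbhs_diam_lt_inv d_xx d_sym d_triangle d_open.
- exact: diam_lt_inv_nested d_sym d_open d_complete.
Qed.

Lemma locally_compact_nested_complete (T : topologicalType) :
  (forall x : T, exists K : set T, compact K /\ nbhs x K) -> nested_complete T.
Proof.
move=> lcT; exists (fun _ A => exists2 K : set T, compact K & A `<=` K); split.
  move=> _ x N xN; have [K [cK xK]] := lcT x.
  by exists (N `&` K); [exact: filterI | split=> [? []//|]; exists K => // ? []].
move=> A decr A0 /(_ 0%N)[K cK AK].
have AF : ProperFilter (filter_from setT A).
  apply: filter_from_proper (fun n _ => A0 n); apply: filter_fromT_filter; first by exists 0%N.
  move=> i j; exists (maxn i j) => y Ay.
  by split; apply: nested_sets_le decr _ _ _ y Ay; rewrite ?leq_maxl ?leq_maxr.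
have [x [_ clx]] := cK _ AF (ex_intro2 _ _ 0%N I AK).
by exists x => n B xB; apply: clx xB; exists n.
Qed.

Theorem proposition3p5
  (H : topologicalType) (mulH : H -> H -> H) (invH : H -> H) (oneH : H)
  (hH : is_topological_group mulH invH oneH)
  (hHsp : completely_metrizable H \/ locally_compact_hausdorff H)
  (G : Type) (mulG : G -> G -> G) (invG : G -> G) (oneG : G)
  (hG : is_group mulG invG oneG)
  (hcard : card_lt_continuum G)
  (phi : H -> G) (hphi : forall x y, phi (mulH x y) = mulG (phi x) (phi y)) :
  exists V : set H, open V /\ V oneH /\
    forall V' : set H, nbhs oneH V' -> V' `<=` V -> phi @` V' = phi @` V.
Proof.
apply: contrapT => unstable; apply: hcard.
have [small [small_nbhs small_nested]] : nested_complete H.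
  case: hHsp => [/completely_metrizable_nested_complete //|[_]].
  exact: locally_compact_nested_complete.
apply: (separating_split_injection (f := phi) small_nbhs small_nested).
- exact: topological_group_regular hH.
- by exists oneH.
- by move=> C; exact: (unstable_split hH hG hphi unstable).
Qed.
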